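(* Let $P$ be an orthogonal polygon without holes and let $S$ be a maximal square of $P$ with side length $d$ such that: the top and bottom sides of $S$ overlap with horizontal edges $e_1$ and $e_2$ of $P$ respectively; $e_1$ contains the top-right corner of $S$; $e_2$ contains the bottom-right corner of $S$; and there is a strip $Y$ between $e_1$ and $e_2$ whose right side is at distance more than $d$ from the right side of $S$. Let $S'$ be the reflection of $S$ in its right side. Then for every partial solution $\mathcal{R}$ with $S\in\mathcal{R}$ and such that no rec-pack of $\mathcal{R}$ overlaps $S'$, the set $\mathcal{R}\cup\{S'\}$ is also a partial solution.
   Context: $P$ is a simple polygon with integer vertex coordinates and axis-parallel edges. A valid square is an axis-parallel square contained in $P$; it is maximal if no larger-area valid square contains it. A strip of $P$ is a maximal axis-parallel non-square rectangular region lying inside $P$ such that each of its two longer sides is completely contained in an edge of $P$. A rec-pack is an axis-parallel rectangle contained in $P$ of dimensions $t\times \eta t$ or $\eta t\times t$ with $\eta\in\mathbb{N}$ (every valid square is a rec-pack); its extraction $\mathsf{ext}(R)$ is the set of the $\eta$ side-$t$ squares tiling $R$. A set $\mathcal{R}'$ of rec-packs is a minimum covering of $P$ if $\bigcup_{R\in\mathcal{R}'}\mathsf{ext}(R)$ is a minimum-cardinality set of valid squares with union $P$ and distinct rec-packs have disjoint extractions. A partial solution is a set of rec-packs contained in some minimum covering. *)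

From Stdlib Require Import Reals ZArith List Arith Lra Lia.
Open Scope R_scope.

(* An orthogonal polygon is given by its cyclic list of vertices (integer
   coordinates). Edge k joins vertex k and vertex (k+1) mod n. *)
Definition vtx (V : list (Z * Z)) (k : nat) : Z * Z := nth k V (0%Z, 0%Z).
Definition nxt (V : list (Z * Z)) (k : nat) : nat := ((k + 1) mod length V)%nat.

Definition edge_horizontal (V : list (Z * Z)) (k : nat) : Prop :=
  snd (vtx V k) = snd (vtx V (nxt V k)) /\ fst (vtx V k) <> fst (vtx V (nxt V k)).
Definition edge_vertical (V : list (Z * Z)) (k : nat) : Prop :=
  fst (vtx V k) = fst (vtx V (nxt V k)) /\ snd (vtx V k) <> snd (vtx V (nxt V k)).

Definition pt := (R * R)%type.
Definition ptZ (a : Z * Z) : pt := (IZR (fst a), IZR (snd a)).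

Definition on_edge (V : list (Z * Z)) (k : nat) (p : pt) : Prop :=
  let a := ptZ (vtx V k) in let b := ptZ (vtx V (nxt V k)) in
  Rmin (fst a) (fst b) <= fst p <= Rmax (fst a) (fst b) /\
  Rmin (snd a) (snd b) <= snd p <= Rmax (snd a) (snd b).

(* simple orthogonal polygon (hence without holes): every edge is
   axis-parallel of positive length, consecutive edges alternate between
   horizontal and vertical, and two distinct edges meet only when they are
   consecutive, and then only at their common vertex. *)
Definition ortho_polygon (V : list (Z * Z)) : Prop :=
  (4 <= length V)%nat /\
  (forall k, (k < length V)%nat -> edge_horizontal V k \/ edge_vertical V k) /\
  (forall k, (k < length V)%nat -> (edge_horizontal V k <-> edge_vertical V (nxt V k))) /\
  (forall i j p, (i < length V)%nat -> (j < length V)%nat -> i <> j ->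
     on_edge V i p -> on_edge V j p ->
     (j = nxt V i /\ p = ptZ (vtx V j)) \/ (i = nxt V j /\ p = ptZ (vtx V i))).

(* The unit cell [i,i+1]x[j,j+1] lies inside the polygon iff the horizontal
   ray from its centre to the right crosses an odd number of vertical edges. *)
Definition crossings (V : list (Z * Z)) (i j : Z) : nat :=
  length (filter (fun k =>
    let a := vtx V k in let b := vtx V (nxt V k) in
    (Z.eqb (fst a) (fst b) && Z.ltb i (fst a) &&
     Z.leb (Z.min (snd a) (snd b)) j && Z.ltb j (Z.max (snd a) (snd b)))%bool)
    (seq 0 (length V))).
Definition cell_in (V : list (Z * Z)) (i j : Z) : Prop := Nat.odd (crossings V i j) = true.

Definition inP (V : list (Z * Z)) (p : pt) : Prop :=
  exists i j : Z, cell_in V i j /\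
    IZR i <= fst p <= IZR (i + 1) /\ IZR j <= snd p <= IZR (j + 1).

Record rect := Rect { rx1 : R; ry1 : R; rx2 : R; ry2 : R }.
Definition width (r : rect) := rx2 r - rx1 r.
Definition height (r : rect) := ry2 r - ry1 r.
Definition nondeg (r : rect) : Prop := rx1 r < rx2 r /\ ry1 r < ry2 r.
Definition in_rect (r : rect) (p : pt) : Prop :=
  rx1 r <= fst p <= rx2 r /\ ry1 r <= snd p <= ry2 r.
Definition rect_sub (r s : rect) : Prop := forall p, in_rect r p -> in_rect s p.
Definition rect_in_P (V : list (Z * Z)) (r : rect) : Prop :=
  nondeg r /\ forall p, in_rect r p -> inP V p.
(* two rectangles overlap: their interiors intersect *)
Definition overlap (r s : rect) : Prop :=
  Rmax (rx1 r) (rx1 s) < Rmin (rx2 r) (rx2 s) /\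
  Rmax (ry1 r) (ry1 s) < Rmin (ry2 r) (ry2 s).

Definition is_square (r : rect) : Prop := width r = height r.
Definition valid_square (V : list (Z * Z)) (s : rect) : Prop :=
  rect_in_P V s /\ is_square s.
Definition maximal_square (V : list (Z * Z)) (s : rect) : Prop :=
  valid_square V s /\
  forall t, valid_square V t -> rect_sub s t -> width t * height t <= width s * height s.

Definition top_side_in_edge (V : list (Z * Z)) (r : rect) (k : nat) : Prop :=
  forall x, rx1 r <= x <= rx2 r -> on_edge V k (x, ry2 r).
Definition bottom_side_in_edge (V : list (Z * Z)) (r : rect) (k : nat) : Prop :=
  forall x, rx1 r <= x <= rx2 r -> on_edge V k (x, ry1 r).
Definition left_side_in_edge (V : list (Z * Z)) (r : rect) (k : nat) : Prop :=
  forall y, ry1 r <= y <= ry2 r -> on_edge V k (rx1 r, y).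
Definition right_side_in_edge (V : list (Z * Z)) (r : rect) (k : nat) : Prop :=
  forall y, ry1 r <= y <= ry2 r -> on_edge V k (rx2 r, y).

Definition longer_sides_on_edges (V : list (Z * Z)) (r : rect) : Prop :=
  (height r < width r ->
     (exists k, (k < length V)%nat /\ top_side_in_edge V r k) /\
     (exists k, (k < length V)%nat /\ bottom_side_in_edge V r k)) /\
  (width r < height r ->
     (exists k, (k < length V)%nat /\ left_side_in_edge V r k) /\
     (exists k, (k < length V)%nat /\ right_side_in_edge V r k)).

Definition strip_cand (V : list (Z * Z)) (r : rect) : Prop :=
  rect_in_P V r /\ ~ is_square r /\ longer_sides_on_edges V r.
Definition is_strip (V : list (Z * Z)) (y : rect) : Prop :=
  strip_cand V y /\ forall z, strip_cand V z -> rect_sub y z -> z = y.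
Definition strip_between (V : list (Z * Z)) (y : rect) (k1 k2 : nat) : Prop :=
  is_strip V y /\ height y < width y /\
  top_side_in_edge V y k1 /\ bottom_side_in_edge V y k2.

Definition rec_pack (V : list (Z * Z)) (r : rect) : Prop :=
  rect_in_P V r /\
  exists (t : R) (eta : nat), 0 < t /\ (1 <= eta)%nat /\
    ((width r = t /\ height r = INR eta * t) \/ (width r = INR eta * t /\ height r = t)).

(* q belongs to ext(r): one of the eta side-t squares tiling r *)
Definition in_ext (r q : rect) : Prop :=
  (width r <= height r /\ rx1 q = rx1 r /\ rx2 q = rx2 r /\
     exists k : nat, ry1 q = ry1 r + INR k * width r /\
       ry2 q = ry1 q + width r /\ ry2 q <= ry2 r) \/
  (height r <= width r /\ ry1 q = ry1 r /\ ry2 q = ry2 r /\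
     exists k : nat, rx1 q = rx1 r + INR k * height r /\
       rx2 q = rx1 q + height r /\ rx2 q <= rx2 r).

Definition square_cover (V : list (Z * Z)) (C : list rect) : Prop :=
  NoDup C /\ (forall q, In q C -> valid_square V q) /\
  (forall p, inP V p -> exists q, In q C /\ in_rect q p).

Definition min_covering (V : list (Z * Z)) (Rs : list rect) : Prop :=
  NoDup Rs /\ (forall r, In r Rs -> rec_pack V r) /\
  (forall r1 r2 q, In r1 Rs -> In r2 Rs -> r1 <> r2 -> in_ext r1 q -> in_ext r2 q -> False) /\
  exists L : list rect,
    (forall q, In q L <-> exists r, In r Rs /\ in_ext r q) /\
    square_cover V L /\
    forall C, square_cover V C -> (length L <= length C)%nat.

Definition partial_solution (V : list (Z * Z)) (Rs : list rect) : Prop :=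
  exists Rs', min_covering V Rs' /\ incl Rs Rs'.

Definition reflect_right (s : rect) : rect :=
  Rect (rx2 s) (ry1 s) (rx2 s + width s) (ry2 s).

(* Write a = rx2 S and let y1 < y2 be the heights of e2 and e1.  The corridor
   [a, rx2 Y) x [y1, y2] lies in P: it is filled by S on the left and by the strip Y
   on the right, and no vertical edge of P lies in between (following the boundary
   from such an edge one would never leave the corridor, since a horizontal edge
   cannot enter the filled parts and a vertical one cannot cross e1 or e2, yet the
   boundary passes through e1), so every cell in between has the ray-crossing parity
   of a cell of Y.  Hence S' is a valid square.  Now take a minimum
   covering containing R, with its set L of extracted squares.  The square Q of L
   covering a point just to the right of a cannot cross e1 or e2, so it lies in
   S u S'.  Replacing Q by S' in L, and taking the squares of L not extracted from R
   as rec-packs of their own, gives a minimum covering containing R and S'. *)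

From Stdlib Require Import Reals ZArith List Lra Lia Bool ClassicalEpsilon.
Open Scope R_scope.

Local Notation xv V k := (fst (vtx V k)).
Local Notation yv V k := (snd (vtx V k)).

Lemma Zle_of_IZR_lt_succ (a b : Z) : IZR a < IZR b + 1 -> (a <= b)%Z.
Proof. rewrite <- plus_IZR. intro H. apply lt_IZR in H. lia. Qed.

Lemma Rmin_IZR (a b : Z) : Rmin (IZR a) (IZR b) = IZR (Z.min a b).
Proof.
  destruct (Z.le_ge_cases a b) as [H|H].
  - rewrite Z.min_l by exact H. apply Rmin_left, IZR_le, H.
  - rewrite Z.min_r by exact H. apply Rmin_right, IZR_le, H.
Qed.

Lemma Rmax_IZR (a b : Z) : Rmax (IZR a) (IZR b) = IZR (Z.max a b).
Proof.
  destruct (Z.le_ge_cases a b) as [H|H].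
  - rewrite Z.max_r by exact H. apply Rmax_right, IZR_le, H.
  - rewrite Z.max_l by exact H. apply Rmax_left, IZR_le, H.
Qed.

Lemma Rmax_lt_Rmin a b c d : Rmax a b < Rmin c d <-> a < c /\ a < d /\ b < c /\ b < d.
Proof. unfold Rmax, Rmin. destruct Rle_dec, Rle_dec; split; intros; lra. Qed.

Lemma Rmax_Rmin_between a b x c d :
  Rmax a b < x < Rmin c d <-> a < x /\ b < x /\ x < c /\ x < d.
Proof. unfold Rmax, Rmin. destruct Rle_dec, Rle_dec; split; intros; lra. Qed.

Lemma exists_floor (x : R) : exists z : Z, IZR z <= x < IZR z + 1.
Proof.
  destruct (archimed x) as [H1 H2]. exists (up x - 1)%Z.
  rewrite minus_IZR. lra.
Qed.

Lemma IZR_neq_half (z i : Z) : IZR z <> IZR i + / 2.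
Proof.
  intro H. pose proof (Zle_of_IZR_lt_succ z i ltac:(lra)).
  assert (i < z)%Z by (apply lt_IZR; lra). lia.
Qed.

Lemma exists_nonint_between (u v : R) :
  u < v -> exists x z, u < x < v /\ IZR z < x < IZR z + 1.
Proof.
  intro Huv. set (m := (u + v) / 2). destruct (exists_floor m) as [z Hz].
  destruct (Rle_lt_or_eq_dec (IZR z) m (proj1 Hz)) as [Hlt|Heq].
  - exists m, z. unfold m in *. lra.
  - pose proof (Rmin_l ((v - u) / 4) (/ 2)). pose proof (Rmin_r ((v - u) / 4) (/ 2)).
    assert (0 < Rmin ((v - u) / 4) (/ 2)) by (apply Rmin_glb_lt; lra).
    exists (m + Rmin ((v - u) / 4) (/ 2)), z. unfold m in *. lra.
Qed.

Lemma inP_cell V (x y : R) (i j : Z) :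
  inP V (x, y) -> IZR i < x < IZR i + 1 -> IZR j < y < IZR j + 1 -> cell_in V i j.
Proof.
  intros [i' [j' [Hc [Hx Hy]]]] Hi Hj. simpl in Hx, Hy. rewrite plus_IZR in Hx, Hy.
  pose proof (Zle_of_IZR_lt_succ i' i ltac:(lra)). pose proof (Zle_of_IZR_lt_succ i i' ltac:(lra)).
  pose proof (Zle_of_IZR_lt_succ j' j ltac:(lra)). pose proof (Zle_of_IZR_lt_succ j j' ltac:(lra)).
  replace i with i' by lia. replace j with j' by lia. exact Hc.
Qed.

Lemma on_edge_iff V k x y :
  on_edge V k (x, y) <->
  IZR (Z.min (xv V k) (xv V (nxt V k))) <= x <= IZR (Z.max (xv V k) (xv V (nxt V k))) /\
  IZR (Z.min (yv V k) (yv V (nxt V k))) <= y <= IZR (Z.max (yv V k) (yv V (nxt V k))).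
Proof. unfold on_edge, ptZ. simpl. rewrite !Rmin_IZR, !Rmax_IZR. tauto. Qed.

Fixpoint parity {A} (f : A -> bool) (l : list A) : bool :=
  match l with nil => false | k :: l' => xorb (f k) (parity f l') end.

Lemma odd_length_filter {A} (f : A -> bool) l :
  Nat.odd (length (filter f l)) = parity f l.
Proof.
  induction l as [|a l IH]; simpl; [reflexivity|].
  destruct (f a); simpl; rewrite <- IH; [|reflexivity].
  rewrite Nat.odd_succ, <- Nat.negb_odd. reflexivity.
Qed.

Lemma parity_xor {A} (f g : A -> bool) l :
  parity (fun k => xorb (f k) (g k)) l = xorb (parity f l) (parity g l).
Proof.
  induction l as [|a l IH]; simpl; [reflexivity|]. rewrite IH.
  destruct (f a), (g a), (parity f l), (parity g l); reflexivity.
Qed.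

Lemma parity_ext_in {A} (f g : A -> bool) l :
  (forall k, In k l -> f k = g k) -> parity f l = parity g l.
Proof.
  induction l as [|a l IH]; simpl; intros H; [reflexivity|].
  rewrite H, IH by auto. reflexivity.
Qed.

Lemma parity_false {A} (f : A -> bool) l :
  (forall k, In k l -> f k = false) -> parity f l = false.
Proof.
  induction l as [|a l IH]; simpl; intros H; [reflexivity|].
  rewrite H, IH by auto. reflexivity.
Qed.

Lemma parity_unique {A} (f : A -> bool) l k0 :
  NoDup l -> In k0 l -> f k0 = true -> (forall k, In k l -> f k = true -> k = k0) ->
  parity f l = true.
Proof.
  induction l as [|a l IH]; simpl; intros Hnd Hin Hf Hu; [contradiction|].
  apply NoDup_cons_iff in Hnd as [Hna Hnd].
  destruct Hin as [->|Hin].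
  - rewrite Hf, parity_false; [reflexivity|].
    intros k Hk. destruct (f k) eqn:E; [|reflexivity].
    exfalso. assert (k = k0) by auto. subst. contradiction.
  - destruct (f a) eqn:E.
    + exfalso. assert (a = k0) by auto. subst. contradiction.
    + apply IH; auto.
Qed.

Lemma parity_app {A} (f : A -> bool) l1 l2 :
  parity f (l1 ++ l2) = xorb (parity f l1) (parity f l2).
Proof.
  induction l1 as [|a l IH]; simpl; [reflexivity|]. rewrite IH.
  destruct (f a), (parity f l), (parity f l2); reflexivity.
Qed.

Lemma parity_seq_shift g s m :
  parity (fun k => g (S k)) (seq s m) = parity g (seq (S s) m).
Proof. revert s; induction m as [|m IH]; intros s; simpl; [|rewrite IH]; reflexivity. Qed.

Lemma parity_telescope V (g : nat -> bool) : (1 <= length V)%nat ->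
  parity (fun k => xorb (g k) (g (nxt V k))) (seq 0 (length V)) = false.
Proof.
  intros Hn. rewrite parity_xor.
  enough (parity (fun k => g (nxt V k)) (seq 0 (length V)) = parity g (seq 0 (length V)))
    as -> by apply xorb_nilpotent.
  unfold nxt. destruct (length V) as [|m]; [lia|].
  rewrite (seq_S m 0) at 1. rewrite parity_app.
  rewrite (parity_ext_in _ (fun k => g (S k))).
  - rewrite parity_seq_shift. cbn [seq parity].
    replace ((0 + m + 1) mod S m)%nat with 0%nat
      by (replace (0 + m + 1)%nat with (1 * S m)%nat by lia; symmetry; apply Nat.Div0.mod_mul).
    destruct (g 0%nat), (parity g (seq 1 m)); reflexivity.
  - intros k Hk. apply in_seq in Hk. rewrite Nat.mod_small by lia. f_equal. lia.
Qed.

Definition crosses V (i j : Z) (k : nat) : bool :=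
  let a := vtx V k in let b := vtx V (nxt V k) in
  (Z.eqb (fst a) (fst b) && Z.ltb i (fst a) &&
   Z.leb (Z.min (snd a) (snd b)) j && Z.ltb j (Z.max (snd a) (snd b)))%bool.

Lemma cell_in_parity V i j :
  cell_in V i j <-> parity (crosses V i j) (seq 0 (length V)) = true.
Proof. unfold cell_in, crossings. rewrite odd_length_filter. reflexivity. Qed.

Definition horizontal_through V (i h : Z) (k : nat) : bool :=
  ((yv V k =? h) && (yv V (nxt V k) =? h) &&
   (Z.min (xv V k) (xv V (nxt V k)) <=? i) && (i <? Z.max (xv V k) (xv V (nxt V k))))%Z.

Lemma horizontal_through_spec V i h k :
  horizontal_through V i h k = true <->
  yv V k = h /\ yv V (nxt V k) = h /\
  (Z.min (xv V k) (xv V (nxt V k)) <= i < Z.max (xv V k) (xv V (nxt V k)))%Z.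
Proof.
  unfold horizontal_through. rewrite !andb_true_iff, !Z.eqb_eq, Z.leb_le, Z.ltb_lt. tauto.
Qed.

Ltac destruct_Z_tests :=
  repeat match goal with
  | |- context [Z.eqb ?a ?b] => destruct (Z.eqb_spec a b)
  | |- context [Z.ltb ?a ?b] => destruct (Z.ltb_spec a b)
  | |- context [Z.leb ?a ?b] => destruct (Z.leb_spec a b)
  end; simpl; try reflexivity; exfalso; lia.

Lemma crosses_jump_edge (x x' y y' i h : Z) : x = x' \/ y = y' ->
  (xorb (xorb
     ((x =? x') && (i <? x) && (Z.min y y' <=? h - 1) && (h - 1 <? Z.max y y'))
     ((x =? x') && (i <? x) && (Z.min y y' <=? h) && (h <? Z.max y y')))
     ((y =? h) && (y' =? h) && (Z.min x x' <=? i) && (i <? Z.max x x')) =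
   xorb ((i <? x) && (y =? h)) ((i <? x') && (y' =? h)))%Z.
Proof. intros [<-|<-]; destruct_Z_tests. Qed.

Lemma ortho_len V : ortho_polygon V -> (1 <= length V)%nat.
Proof. intros [H _]. lia. Qed.

(* Telescoping [g v = (i < x_v) && (y_v = h)] along the boundary: vertical edges
   contribute the change of their crossing indicator between rows [h - 1] and [h],
   horizontal edges contribute exactly when they pass through [(i + 1/2, h)]. *)
Lemma crossing_parity_jump V i h : ortho_polygon V ->
  xorb (parity (crosses V i (h - 1)) (seq 0 (length V)))
       (parity (crosses V i h) (seq 0 (length V))) =
  parity (horizontal_through V i h) (seq 0 (length V)).
Proof.
  intros Hpol.
  pose proof (parity_telescope V (fun v => (i <? xv V v) && (yv V v =? h))%Z
                (ortho_len V Hpol)) as T.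
  rewrite <- (parity_ext_in (fun k => xorb (xorb (crosses V i (h - 1) k) (crosses V i h k))
                                           (horizontal_through V i h k))) in T.
  - rewrite !parity_xor in T. revert T.
    destruct (parity (crosses V i (h - 1)) _), (parity (crosses V i h) _),
             (parity (horizontal_through V i h) _); simpl; congruence.
  - intros k Hk. apply in_seq in Hk. apply crosses_jump_edge.
    destruct Hpol as (_ & Hhv & _). destruct (Hhv k ltac:(lia)) as [[Hh _]|[Hv _]]; auto.
Qed.

Lemma horizontal_through_on_edge V i h k :
  horizontal_through V i h k = true -> on_edge V k (IZR i + / 2, IZR h).
Proof.
  intros (Hy & Hy' & Hi1 & Hi2)%horizontal_through_spec. apply on_edge_iff.
  rewrite Hy, Hy', Z.min_id, Z.max_id.
  apply IZR_le in Hi1. apply Zlt_le_succ, IZR_le in Hi2. rewrite succ_IZR in Hi2. lra.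
Qed.

Lemma ortho_edges_meet_at_vertex V i j p : ortho_polygon V ->
  (i < length V)%nat -> (j < length V)%nat -> i <> j ->
  on_edge V i p -> on_edge V j p -> exists v, p = ptZ (vtx V v).
Proof.
  intros (_ & _ & _ & Hmeet) Hi Hj Hij H1 H2.
  destruct (Hmeet i j p Hi Hj Hij H1 H2) as [[_ ->]|[_ ->]]; eauto.
Qed.

Lemma horizontal_edge_separates V k0 i h : ortho_polygon V -> (k0 < length V)%nat ->
  horizontal_through V i h k0 = true -> cell_in V i (h - 1) -> cell_in V i h -> False.
Proof.
  intros Hpol Hk0 Hthrough Hbelow%cell_in_parity Habove%cell_in_parity.
  enough (parity (horizontal_through V i h) (seq 0 (length V)) = true) as Hodd.
  { rewrite <- crossing_parity_jump, Hbelow, Habove in Hodd by exact Hpol. discriminate. }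
  apply parity_unique with k0; auto using seq_NoDup.
  - apply in_seq. lia.
  - intros k Hk Hk'. apply in_seq in Hk.
    destruct (Nat.eq_dec k k0) as [|Hne]; [assumption|exfalso].
    destruct (ortho_edges_meet_at_vertex V k k0 _ Hpol ltac:(lia) Hk0 Hne
                (horizontal_through_on_edge V i h k Hk')
                (horizontal_through_on_edge V i h k0 Hthrough)) as [v Hv].
    injection Hv as Hv _. exact (IZR_neq_half _ _ (eq_sym Hv)).
Qed.

Lemma vertical_edge_avoids_horizontal_edge V kk k (c h : Z) : ortho_polygon V ->
  (kk < length V)%nat -> (k < length V)%nat ->
  edge_horizontal V kk -> yv V kk = h ->
  (Z.min (xv V kk) (xv V (nxt V kk)) < c < Z.max (xv V kk) (xv V (nxt V kk)))%Z ->
  xv V k = c -> xv V (nxt V k) = c ->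
  (Z.min (yv V k) (yv V (nxt V k)) <= h <= Z.max (yv V k) (yv V (nxt V k)))%Z -> False.
Proof.
  intros Hpol Hkk Hk [Hy' _] Hy Hc Hx Hx' Hh.
  assert (Hon : on_edge V k (IZR c, IZR h)).
  { apply on_edge_iff. rewrite Hx, Hx', Z.min_id, Z.max_id.
    split; [lra|]. split; apply IZR_le; lia. }
  assert (Hon' : on_edge V kk (IZR c, IZR h)).
  { apply on_edge_iff. rewrite <- Hy', Hy, Z.min_id, Z.max_id.
    split; [|lra]. split; apply IZR_le; lia. }
  assert (Hne : k <> kk) by (intros ->; lia).
  destruct Hpol as (_ & _ & _ & Hmeet).
  destruct (Hmeet k kk _ Hk Hkk Hne Hon Hon') as [[-> Hp]|[-> Hp]];
    injection Hp as Hp _; apply eq_IZR in Hp; lia.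
Qed.

Lemma horizontal_edge_separates_points V k (h : Z) (x y y' : R) : ortho_polygon V ->
  (k < length V)%nat -> edge_horizontal V k -> yv V k = h ->
  IZR (Z.min (xv V k) (xv V (nxt V k))) < x < IZR (Z.max (xv V k) (xv V (nxt V k))) ->
  (exists z, IZR z < x < IZR z + 1) ->
  IZR h - 1 < y < IZR h -> IZR h < y' < IZR h + 1 ->
  inP V (x, y) -> inP V (x, y') -> False.
Proof.
  intros Hpol Hk [Hy' _] Hy Hx [z Hz] Hyb Hya Hbelow Habove.
  apply (horizontal_edge_separates V k z h Hpol Hk).
  - apply horizontal_through_spec. split; [exact Hy|]. split; [congruence|].
    split; [apply Zle_of_IZR_lt_succ | apply lt_IZR]; lra.
  - apply (inP_cell V x y); [exact Hbelow|lra|]. rewrite minus_IZR. lra.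
  - apply (inP_cell V x y'); [exact Habove|lra|lra].
Qed.

Lemma horizontal_edge_not_interior V k (h : Z) (u v : R) : ortho_polygon V ->
  (k < length V)%nat -> edge_horizontal V k -> yv V k = h -> u < v ->
  IZR (Z.min (xv V k) (xv V (nxt V k))) < v -> u < IZR (Z.max (xv V k) (xv V (nxt V k))) ->
  (forall x, u < x < v -> inP V (x, IZR h - / 2) /\ inP V (x, IZR h + / 2)) -> False.
Proof.
  intros Hpol Hk Hhor Hy Huv Hv Hu Hregion. pose proof Hhor as [_ Hxne].
  assert (IZR (Z.min (xv V k) (xv V (nxt V k))) < IZR (Z.max (xv V k) (xv V (nxt V k))))
    by (apply IZR_lt; lia).
  destruct (exists_nonint_between (Rmax u (IZR (Z.min (xv V k) (xv V (nxt V k)))))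
              (Rmin v (IZR (Z.max (xv V k) (xv V (nxt V k)))))) as [x [z [Hx Hz]]].
  { apply Rmax_lt_Rmin. lra. }
  apply Rmax_Rmin_between in Hx.
  destruct (Hregion x ltac:(lra)) as [Hbelow Habove].
  apply (horizontal_edge_separates_points V k h x (IZR h - / 2) (IZR h + / 2) Hpol Hk Hhor Hy);
    eauto; lra.
Qed.

Lemma crosses_shift V i f j k : (i <= f)%Z ->
  ~ (xv V k = xv V (nxt V k) /\ (i < xv V k <= f)%Z /\
     (Z.min (yv V k) (yv V (nxt V k)) <= j < Z.max (yv V k) (yv V (nxt V k)))%Z) ->
  crosses V i j k = crosses V f j k.
Proof. intros Hif Hnone. unfold crosses. destruct_Z_tests. Qed.

Section Corridor.

Variable V : list (Z * Z).
Variables (aL a B bR : R) (y1 y2 : Z) (k1 k2 : nat).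

Hypothesis Hpol : ortho_polygon V.
Hypotheses (Hk1 : (k1 < length V)%nat) (Hk2 : (k2 < length V)%nat).
Hypotheses (Hh1 : edge_horizontal V k1) (Hh2 : edge_horizontal V k2).
Hypotheses (Htop : yv V k1 = y2) (Hbot : yv V k2 = y1).
Hypotheses (Htop_left : IZR (Z.min (xv V k1) (xv V (nxt V k1))) < a)
           (Htop_right : bR <= IZR (Z.max (xv V k1) (xv V (nxt V k1))))
           (Hbot_left : IZR (Z.min (xv V k2) (xv V (nxt V k2))) < a)
           (Hbot_right : bR <= IZR (Z.max (xv V k2) (xv V (nxt V k2)))).
Hypotheses (Hy12 : (y1 < y2)%Z) (HaL : aL < a) (HBb : B < bR).
Hypothesis Hleft : forall x y, aL < x < a -> IZR y1 <= y <= IZR y2 -> inP V (x, y).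
Hypothesis Hright : forall x y, B < x < bR -> IZR y1 <= y <= IZR y2 -> inP V (x, y).

Definition in_corridor (v : nat) : Prop :=
  a <= IZR (xv V v) <= B /\ (y1 < yv V v < y2)%Z.

Lemma vertical_edge_exits_corridor k (c : Z) : (k < length V)%nat ->
  xv V k = c -> xv V (nxt V k) = c -> a <= IZR c <= B ->
  (Z.min (yv V k) (yv V (nxt V k)) <= y2 <= Z.max (yv V k) (yv V (nxt V k)) \/
   Z.min (yv V k) (yv V (nxt V k)) <= y1 <= Z.max (yv V k) (yv V (nxt V k)))%Z -> False.
Proof.
  intros Hk Hx Hx' Hc [Hcross|Hcross].
  - apply (vertical_edge_avoids_horizontal_edge V k1 k c y2); auto.
    split; apply lt_IZR; lra.
  - apply (vertical_edge_avoids_horizontal_edge V k2 k c y1); auto.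
    split; apply lt_IZR; lra.
Qed.

(* Going along the boundary from an edge inside the corridor, one stays inside:
   horizontal edges cannot enter the filled regions on either side, and vertical
   ones cannot cross the edges [k1] and [k2]. *)
Lemma in_corridor_nxt k : (k < length V)%nat ->
  in_corridor k -> in_corridor (nxt V k) -> in_corridor (nxt V (nxt V k)).
Proof.
  intros Hk _ [Hx Hy]. unfold in_corridor.
  set (k' := nxt V k) in *.
  assert (Hk' : (k' < length V)%nat)
    by (apply Nat.mod_upper_bound; pose proof (ortho_len V Hpol); lia).
  assert (Hrow : forall u v,
            (forall x y, u < x < v -> IZR y1 <= y <= IZR y2 -> inP V (x, y)) ->
            forall x, u < x < v ->
            inP V (x, IZR (yv V k') - / 2) /\ inP V (x, IZR (yv V k') + / 2)).
  { intros u v Hreg x Hxuv.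
    assert (IZR y1 + 1 <= IZR (yv V k')) by (rewrite <- plus_IZR; apply IZR_le; lia).
    assert (IZR (yv V k') + 1 <= IZR y2) by (rewrite <- plus_IZR; apply IZR_le; lia).
    split; apply Hreg; lra. }
  pose proof Hpol as (_ & Hhv & _).
  destruct (Hhv k' Hk') as [Hhor|[Hv Hyne]].
  - pose proof Hhor as [Hy' _]. split; [|lia].
    assert (IZR (Z.min (xv V k') (xv V (nxt V k'))) <= IZR (xv V (nxt V k')) <=
            IZR (Z.max (xv V k') (xv V (nxt V k'))) /\
            IZR (Z.min (xv V k') (xv V (nxt V k'))) <= IZR (xv V k') <=
            IZR (Z.max (xv V k') (xv V (nxt V k')))) by (split; split; apply IZR_le; lia).
    split; apply Rnot_lt_le; intro Hout.
    + apply (horizontal_edge_not_interior V k' (yv V k') aL a); auto;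
        try (apply Hrow; auto); lra.
    + apply (horizontal_edge_not_interior V k' (yv V k') B bR); auto;
        try (apply Hrow; auto); lra.
  - split; [rewrite <- Hv; exact Hx|].
    enough (~ (yv V (nxt V k') >= y2)%Z /\ ~ (yv V (nxt V k') <= y1)%Z) by lia.
    split; intro Hout; apply (vertical_edge_exits_corridor k' (xv V k')); auto; lia.
Qed.

Lemma in_corridor_iter k0 : (k0 < length V)%nat ->
  in_corridor k0 -> in_corridor (nxt V k0) -> forall m, in_corridor ((k0 + m) mod length V).
Proof.
  intros Hk0 H0 H1.
  pose proof (ortho_len V Hpol) as Hn.
  assert (Hmod : forall m, nxt V ((k0 + m) mod length V) = ((k0 + S m) mod length V)%nat).
  { intro m. unfold nxt. rewrite Nat.Div0.add_mod_idemp_l by lia. f_equal. lia. }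
  assert (Hpair : forall m, in_corridor ((k0 + m) mod length V) /\
                            in_corridor ((k0 + S m) mod length V)).
  { induction m as [|m [IH IH']].
    - rewrite <- Hmod, Nat.add_0_r, Nat.mod_small by lia. auto.
    - split; [exact IH'|]. rewrite <- (Hmod (S m)), <- (Hmod m) in *.
      apply in_corridor_nxt; [apply Nat.mod_upper_bound; lia|exact IH|exact IH']. }
  intro m. apply Hpair.
Qed.

Lemma no_vertical_edge_in_corridor k (c j : Z) : (k < length V)%nat ->
  xv V k = c -> xv V (nxt V k) = c -> a <= IZR c <= B ->
  (Z.min (yv V k) (yv V (nxt V k)) <= j < Z.max (yv V k) (yv V (nxt V k)))%Z ->
  (y1 <= j < y2)%Z -> False.
Proof.
  intros Hk Hx Hx' Hc Hj Hjy.
  destruct (Z_lt_le_dec (Z.max (yv V k) (yv V (nxt V k))) y2) as [Hlt2|Hge2];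
    [|apply (vertical_edge_exits_corridor k c); auto; lia].
  destruct (Z_lt_le_dec y1 (Z.min (yv V k) (yv V (nxt V k)))) as [Hlt1|Hge1];
    [|apply (vertical_edge_exits_corridor k c); auto; lia].
  (* Otherwise the boundary walk from [k] would reach [k1], which starts at height [y2]. *)
  assert (Hstart : in_corridor k /\ in_corridor (nxt V k)).
  { unfold in_corridor. rewrite Hx, Hx'. repeat split; try lra; lia. }
  assert (Hreach : ((k + (length V - k + k1)) mod length V)%nat = k1).
  { replace (k + (length V - k + k1))%nat with (k1 + 1 * length V)%nat by lia.
    rewrite Nat.Div0.mod_add. apply Nat.mod_small, Hk1. }
  pose proof (in_corridor_iter k Hk (proj1 Hstart) (proj2 Hstart) (length V - k + k1))
    as [_ Hy].
  rewrite Hreach in Hy. lia.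
Qed.

Lemma corridor_middle_in_P x y : a <= x <= B -> IZR y1 <= y <= IZR y2 -> inP V (x, y).
Proof.
  intros Hx Hy.
  destruct (exists_floor x) as [i Hi], (exists_floor y) as [j0 Hj0],
           (exists_floor B) as [f Hf].
  set (j := Z.min j0 (y2 - 1)).
  assert (Hj : (y1 <= j < y2)%Z)
    by (pose proof (Zle_of_IZR_lt_succ y1 j0 ltac:(lra)); unfold j; lia).
  assert (Hjy : IZR j <= y <= IZR j + 1).
  { unfold j. destruct (Z.le_ge_cases j0 (y2 - 1)) as [Hc|Hc].
    - rewrite Z.min_l by exact Hc. lra.
    - rewrite Z.min_r by exact Hc. apply IZR_le in Hc. rewrite minus_IZR in *. lra. }
  assert (Hcell_right : cell_in V f j).
  { set (xq := (B + Rmin bR (IZR f + 1)) / 2).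
    pose proof (Rmin_l bR (IZR f + 1)). pose proof (Rmin_r bR (IZR f + 1)).
    assert (B < Rmin bR (IZR f + 1)) by (apply Rmin_glb_lt; lra).
    assert (IZR y1 <= IZR j /\ IZR j + 1 <= IZR y2)
      by (rewrite <- plus_IZR; split; apply IZR_le; lia).
    apply (inP_cell V xq (IZR j + / 2)); [apply Hright|..]; unfold xq; lra. }
  (* No vertical edge separates the cell [(i, j)] from the cell [(f, j)] of the right part. *)
  assert (Hif : (i <= f)%Z) by (apply Zle_of_IZR_lt_succ; lra).
  exists i, j. split; [|simpl; rewrite !plus_IZR; lra].
  apply cell_in_parity. apply cell_in_parity in Hcell_right. rewrite <- Hcell_right.
  apply parity_ext_in. intros k Hk. apply in_seq in Hk.
  apply crosses_shift; [exact Hif|]. intros (Hv & Hc & Hjk).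
  apply (no_vertical_edge_in_corridor k (xv V k) j);
    [lia|reflexivity|symmetry; exact Hv| |exact Hjk|exact Hj].
  split.
  - assert (IZR i + 1 <= IZR (xv V k)) by (rewrite <- plus_IZR; apply IZR_le; lia). lra.
  - assert (IZR (xv V k) <= IZR f) by (apply IZR_le; lia). lra.
Qed.

Lemma corridor_in_P x y : a <= x < bR -> IZR y1 <= y <= IZR y2 -> inP V (x, y).
Proof.
  intros Hx Hy. destruct (Rle_lt_dec x B).
  - apply corridor_middle_in_P; lra.
  - apply Hright; lra.
Qed.

Lemma square_in_corridor_bounded (Q : rect) px py : rect_in_P V Q ->
  in_rect Q (px, py) -> a < px < bR -> IZR y1 < py < IZR y2 ->
  IZR y1 <= ry1 Q /\ ry2 Q <= IZR y2.
Proof.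
  intros [[HQx HQy] HQ] [Hqx Hqy] Hpx Hpy. simpl in Hqx, Hqy.
  destruct (exists_nonint_between (Rmax a (rx1 Q)) (Rmin bR (rx2 Q))) as [x [z [Hx Hz]]].
  { apply Rmax_lt_Rmin. lra. }
  apply Rmax_Rmin_between in Hx.
  assert (Hrow : IZR y1 + 1 <= IZR y2) by (rewrite <- plus_IZR; apply IZR_le; lia).
  split; apply Rnot_lt_le; intro Hout.
  - pose proof (Rmax_l (ry1 Q) (IZR y1 - / 2)). pose proof (Rmax_r (ry1 Q) (IZR y1 - / 2)).
    set (y := Rmax (ry1 Q) (IZR y1 - / 2)) in *.
    assert (y < IZR y1) by (apply Rmax_lub_lt; lra).
    apply (horizontal_edge_separates_points V k2 y1 x y (IZR y1 + / 2)); auto;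
      [lra|eauto|lra|lra|apply HQ; split; simpl; lra|apply corridor_in_P; lra].
  - pose proof (Rmin_l (ry2 Q) (IZR y2 + / 2)). pose proof (Rmin_r (ry2 Q) (IZR y2 + / 2)).
    set (y := Rmin (ry2 Q) (IZR y2 + / 2)) in *.
    assert (IZR y2 < y) by (apply Rmin_glb_lt; lra).
    apply (horizontal_edge_separates_points V k1 y2 x (IZR y2 - / 2) y); auto;
      [lra|eauto|lra|lra|apply corridor_in_P; lra|apply HQ; split; simpl; lra].
Qed.

End Corridor.

Lemma overlap_iff r s : overlap r s <->
  (rx1 r < rx2 r /\ rx1 r < rx2 s /\ rx1 s < rx2 r /\ rx1 s < rx2 s) /\
  (ry1 r < ry2 r /\ ry1 r < ry2 s /\ ry1 s < ry2 r /\ ry1 s < ry2 s).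
Proof. unfold overlap. rewrite !Rmax_lt_Rmin. tauto. Qed.

Lemma overlap_refl s : nondeg s -> overlap s s.
Proof. intros [H1 H2]. apply overlap_iff. lra. Qed.

Lemma in_ext_bounds r q : nondeg r -> in_ext r q ->
  rx1 r <= rx1 q /\ rx2 q <= rx2 r /\ ry1 r <= ry1 q /\ ry2 q <= ry2 r.
Proof.
  intros [Hw Hh] [(Hwh & E1 & E2 & k & E3 & E4 & E5)|(Hwh & E1 & E2 & k & E3 & E4 & E5)];
    unfold width, height in *; pose proof (pos_INR k).
  - assert (0 <= INR k * (rx2 r - rx1 r)) by (apply Rmult_le_pos; lra). lra.
  - assert (0 <= INR k * (ry2 r - ry1 r)) by (apply Rmult_le_pos; lra). lra.
Qed.

Lemma overlap_in_ext r q s : nondeg r -> in_ext r q -> overlap q s -> overlap r s.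
Proof.
  intros Hr He Ho. pose proof (in_ext_bounds r q Hr He). pose proof Hr as [].
  apply overlap_iff in Ho. apply overlap_iff. lra.
Qed.

Lemma in_ext_square_refl q : nondeg q -> is_square q -> in_ext q q.
Proof.
  intros [Hw Hh] Hsq. left. unfold is_square, width, height in *.
  split; [lra|]. do 2 (split; [reflexivity|]).
  exists 0%nat. simpl. lra.
Qed.

Lemma in_ext_square_eq q q' : nondeg q -> is_square q -> in_ext q q' -> q' = q.
Proof.
  intros Hq Hsq He. pose proof (in_ext_bounds q q' Hq He). destruct q as [x1 y1 x2 y2].
  unfold is_square, width, height in *. simpl in *.
  destruct He as [(_ & E1 & E2 & _ & _ & E4 & _)|(_ & E1 & E2 & _ & _ & E4 & _)];
    destruct q' as [x1' y1' x2' y2']; unfold width, height in *; simpl in *; f_equal; lra.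
Qed.

Lemma valid_square_rec_pack V q : valid_square V q -> rec_pack V q.
Proof.
  intros [Hq Hsq]. split; [exact Hq|]. exists (width q), 1%nat.
  destruct Hq as [[Hw Hh] _]. unfold is_square, width, height in *.
  split; [lra|]. split; [lia|]. left. simpl. lra.
Qed.

Definition rect_eq_dec (r s : rect) : {r = s} + {r <> s}.
Proof. decide equality; apply Req_EM_T. Defined.

Lemma NoDup_remove_rect (l : list rect) x : NoDup l -> NoDup (remove rect_eq_dec x l).
Proof. intro H. rewrite <- remove_alt. apply NoDup_filter, H. Qed.

Definition extracted (Rs : list rect) (q : rect) : bool :=
  if excluded_middle_informative (exists r, In r Rs /\ in_ext r q) then true else false.

Lemma extracted_spec Rs q : extracted Rs q = true <-> exists r, In r Rs /\ in_ext r q.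
Proof. unfold extracted. destruct excluded_middle_informative; split; easy. Qed.

(* The rec-packs [Rs], completed by the squares of [C] not extracted from them
   (each taken as a rec-pack of its own), form a minimum covering. *)
Lemma partial_solution_of_min_cover V (Rs C : list rect) :
  (forall r, In r Rs -> rec_pack V r) ->
  (forall r1 r2 q, In r1 Rs -> In r2 Rs -> r1 <> r2 -> in_ext r1 q -> in_ext r2 q -> False) ->
  (forall r q, In r Rs -> in_ext r q -> In q C) ->
  square_cover V C -> (forall C', square_cover V C' -> (length C <= length C')%nat) ->
  partial_solution V Rs.
Proof.
  intros Hrp Hdis HextC HC Hmin. pose proof HC as (HCnd & HCv & _).
  set (F := filter (fun q => negb (extracted Rs q)) C).
  assert (HF : forall q, In q F <-> In q C /\ ~ exists r, In r Rs /\ in_ext r q).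
  { intro q. unfold F. rewrite filter_In, negb_true_iff, <- not_true_iff_false,
      extracted_spec. tauto. }
  assert (HFsq : forall q q', In q F -> in_ext q q' -> q' = q).
  { intros q q' Hq. destruct (HCv q (proj1 (proj1 (HF q) Hq))) as [[Hnd _] Hsq].
    apply in_ext_square_eq; assumption. }
  assert (HFext : forall q, In q F -> in_ext q q).
  { intros q Hq. destruct (HCv q (proj1 (proj1 (HF q) Hq))) as [[Hnd _] Hsq].
    apply in_ext_square_refl; assumption. }
  exists (nodup rect_eq_dec Rs ++ F). split.
  2:{ intros r Hr. apply in_or_app. left. apply nodup_In, Hr. }
  split; [|split; [|split]].
  - apply NoDup_app; [apply NoDup_nodup|apply NoDup_filter, HCnd|].
    intros r Hr%nodup_In HrF. pose proof (HFext r HrF). apply HF in HrF as [_ Hnot]. eauto.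
  - intros r [Hr%nodup_In|HrF]%in_app_or; [auto|].
    apply valid_square_rec_pack, HCv, HF, HrF.
  - intros r1 r2 q [H1%nodup_In|H1]%in_app_or [H2%nodup_In|H2]%in_app_or Hne E1 E2.
    + eauto.
    + apply HFsq in E2 as ->; [|exact H2]. apply HF in H2 as [_ Hnot]. eauto.
    + apply HFsq in E1 as ->; [|exact H1]. apply HF in H1 as [_ Hnot]. eauto.
    + apply HFsq in E1 as ->; [|exact H1]. apply HFsq in E2; [congruence|exact H2].
  - exists C. split; [|split; assumption].
    intro q. split.
    + intros Hq. destruct (extracted Rs q) eqn:E.
      * apply extracted_spec in E as (r & Hr & He).
        exists r. split; [apply in_or_app; left; apply nodup_In|]; assumption.
      * assert (HqF : In q F) by (unfold F; apply filter_In; rewrite E; auto).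
        exists q. split; [apply in_or_app; right|apply HFext]; exact HqF.
    + intros (r & [Hr%nodup_In|HrF]%in_app_or & He); [eauto|].
      apply HFsq in He as ->; [|exact HrF]. apply HF, HrF.
Qed.

Lemma square_cover_swap V (L : list rect) Q S S' :
  square_cover V L -> In Q L -> In S L -> S <> Q -> S <> S' -> valid_square V S' ->
  (forall p, in_rect Q p -> in_rect S p \/ in_rect S' p) ->
  square_cover V (S' :: remove rect_eq_dec Q (remove rect_eq_dec S' L)) /\
  (length (S' :: remove rect_eq_dec Q (remove rect_eq_dec S' L)) <= length L)%nat.
Proof.
  intros (HLnd & HLv & HLc) HQ HS HSQ HSS' HS' HQsub.
  assert (Hrest : forall q, In q L -> q <> Q -> q <> S' ->
                    In q (remove rect_eq_dec Q (remove rect_eq_dec S' L))).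
  { intros q Hq HqQ HqS'. apply in_in_remove, in_in_remove; assumption. }
  split; [split; [|split]|].
  - constructor; [|apply NoDup_remove_rect, NoDup_remove_rect, HLnd].
    intros [[_ Habs]%in_remove _]%in_remove. exact (Habs eq_refl).
  - intros q [<-|[[Hq _]%in_remove _]%in_remove]; auto.
  - intros p Hp. destruct (HLc p Hp) as (q & Hq & Hpq).
    destruct (rect_eq_dec q S') as [->|HqS']; [exists S'; simpl; auto|].
    destruct (rect_eq_dec q Q) as [->|HqQ].
    + destruct (HQsub p Hpq); [exists S|exists S']; simpl; auto.
    + exists q. simpl. auto.
  - simpl. apply Nat.le_succ_l. destruct (rect_eq_dec Q S') as [->|HQS'].
    + rewrite remove_remove_eq. apply remove_length_lt, HQ.
    + eapply Nat.lt_le_trans; [|apply remove_length_le].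
      apply remove_length_lt, in_in_remove; assumption.
Qed.

Lemma partial_solution_cons_square V (Rs : list rect) S S' :
  partial_solution V Rs -> In S Rs -> is_square S -> valid_square V S' ->
  (forall r, In r Rs -> ~ overlap r S') ->
  (forall L, square_cover V L -> exists Q, In Q L /\ overlap Q S' /\
     forall p, in_rect Q p -> in_rect S p \/ in_rect S' p) ->
  partial_solution V (S' :: Rs).
Proof.
  intros (Rs' & (_ & Hrp & Hdis & L & HL & HLcov & HLmin) & Hincl) HS HSsq HS' Hfree Henter.
  destruct (Henter L HLcov) as (Q & HQ & HQS' & HQsub).
  pose proof HS' as [[HS'nd _] HS'sq].
  assert (Hnd : forall r, In r Rs -> nondeg r)
    by (intros r Hr; destruct (Hrp r (Hincl r Hr)) as [[Hnd _] _]; exact Hnd).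
  assert (Hfree_ext : forall r q, In r Rs -> in_ext r q -> ~ overlap q S')
    by (intros r q Hr He Ho; exact (Hfree r Hr (overlap_in_ext r q S' (Hnd r Hr) He Ho))).
  assert (HS'ext : forall q, in_ext S' q -> q = S') by (intro q; apply in_ext_square_eq; auto).
  assert (HSL : In S L)
    by (apply HL; exists S; split; [apply Hincl, HS|apply in_ext_square_refl; auto]).
  assert (HSQ : S <> Q) by (intros ->; apply (Hfree Q HS HQS')).
  assert (HSS' : S <> S') by (intros ->; apply (Hfree S' HS), overlap_refl, HS'nd).
  destruct (square_cover_swap V L Q S S' HLcov HQ HSL HSQ HSS' HS' HQsub) as [HC HClen].
  apply (partial_solution_of_min_cover V (S' :: Rs)
           (S' :: remove rect_eq_dec Q (remove rect_eq_dec S' L))); [| | |exact HC|].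
  - intros r [<-|Hr]; [apply valid_square_rec_pack, HS'|apply Hrp, Hincl, Hr].
  - intros r1 r2 q [<-|H1] [<-|H2] Hne E1 E2.
    + exact (Hne eq_refl).
    + apply HS'ext in E1 as ->. eapply Hfree_ext; eauto using overlap_refl.
    + apply HS'ext in E2 as ->. eapply Hfree_ext; eauto using overlap_refl.
    + exact (Hdis r1 r2 q (Hincl r1 H1) (Hincl r2 H2) Hne E1 E2).
  - intros r q [<-|Hr] He; [left; symmetry; apply HS'ext, He|right].
    apply in_in_remove; [intros ->; eapply Hfree_ext; eauto|].
    apply in_in_remove; [intros ->; eapply Hfree_ext; eauto using overlap_refl|].
    apply HL. exists r. split; [apply Hincl|]; assumption.
  - intros C' HC'. specialize (HLmin C' HC'). lia.
Qed.

Lemma exists_left_side_margin (a e : R) (L : list rect) : 0 < e ->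
  exists eps, 0 < eps <= e /\ forall q, In q L -> a < rx1 q -> a + eps <= rx1 q.
Proof.
  intros He. induction L as [|q L [eps [Heps HL]]].
  - exists e. split; [lra|contradiction].
  - destruct (Rlt_dec a (rx1 q)) as [Hq|Hq].
    + exists (Rmin eps (rx1 q - a)).
      pose proof (Rmin_l eps (rx1 q - a)). pose proof (Rmin_r eps (rx1 q - a)).
      split; [split; [apply Rmin_glb_lt|]; lra|].
      intros q' [<-|Hq'] Hlt; [|specialize (HL q' Hq' Hlt)]; lra.
    + exists eps. split; [lra|].
      intros q' [<-|Hq'] Hlt; [lra|auto].
Qed.

Section Reflection.

Variable V : list (Z * Z).
Variables (S Y : rect) (k1 k2 : nat).

Hypothesis Hpol : ortho_polygon V.
Hypothesis HS : valid_square V S.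
Hypotheses (Hk1 : (k1 < length V)%nat) (Hk2 : (k2 < length V)%nat).
Hypotheses (Hh1 : edge_horizontal V k1) (Hh2 : edge_horizontal V k2).
Hypothesis Htop : IZR (yv V k1) = ry2 S.
Hypothesis Htop_overlap :
  Rmax (rx1 S) (IZR (Z.min (xv V k1) (xv V (nxt V k1)))) <
  Rmin (rx2 S) (IZR (Z.max (xv V k1) (xv V (nxt V k1)))).
Hypothesis Hbot : IZR (yv V k2) = ry1 S.
Hypothesis Hbot_overlap :
  Rmax (rx1 S) (IZR (Z.min (xv V k2) (xv V (nxt V k2)))) <
  Rmin (rx2 S) (IZR (Z.max (xv V k2) (xv V (nxt V k2)))).
Hypothesis HY : strip_between V Y k1 k2.
Hypothesis HYfar : rx2 Y - rx2 S > width S.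

Lemma strip_between_corridor :
  IZR (Z.min (xv V k1) (xv V (nxt V k1))) < rx2 S /\
  rx2 Y <= IZR (Z.max (xv V k1) (xv V (nxt V k1))) /\
  IZR (Z.min (xv V k2) (xv V (nxt V k2))) < rx2 S /\
  rx2 Y <= IZR (Z.max (xv V k2) (xv V (nxt V k2))) /\
  (yv V k2 < yv V k1)%Z /\ rx1 S < rx2 S /\ rx1 Y < rx2 Y /\
  (forall x y, rx1 S < x < rx2 S -> IZR (yv V k2) <= y <= IZR (yv V k1) -> inP V (x, y)) /\
  (forall x y, rx1 Y < x < rx2 Y -> IZR (yv V k2) <= y <= IZR (yv V k1) -> inP V (x, y)).
Proof.
  destruct HS as [[[HSx HSy] HSin] _].
  destruct HY as ([[[[HYx HYy] HYin] _] _] & _ & HYtop & HYbot).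
  apply Rmax_lt_Rmin in Htop_overlap, Hbot_overlap.
  pose proof (proj1 (on_edge_iff _ _ _ _) (HYtop (rx2 Y) ltac:(lra))) as [HYr1 HYy2].
  pose proof (proj1 (on_edge_iff _ _ _ _) (HYbot (rx2 Y) ltac:(lra))) as [HYr2 HYy1].
  pose proof Hh1 as [E1 _]. pose proof Hh2 as [E2 _].
  rewrite <- E1, Z.min_id, Z.max_id in HYy2. rewrite <- E2, Z.min_id, Z.max_id in HYy1.
  assert (yv V k2 < yv V k1)%Z by (apply lt_IZR; lra).
  repeat split; try tauto; try lra.
  - intros x y Hx Hy. apply HSin. split; simpl; lra.
  - intros x y Hx Hy. apply HYin. split; simpl; lra.
Qed.

Lemma reflection_corridor_in_P x y :
  rx2 S <= x < rx2 Y -> ry1 S <= y <= ry2 S -> inP V (x, y).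
Proof.
  destruct strip_between_corridor as (H1 & H2 & H3 & H4 & H5 & H6 & H7 & H8 & H9).
  rewrite <- Htop, <- Hbot.
  exact (corridor_in_P V _ _ _ _ _ _ k1 k2 Hpol Hk1 Hk2 Hh1 Hh2 eq_refl eq_refl
           H1 H2 H3 H4 H5 H6 H7 H8 H9 x y).
Qed.

Lemma square_in_reflection_corridor_bounded (Q : rect) px py :
  rect_in_P V Q -> in_rect Q (px, py) -> rx2 S < px < rx2 Y -> ry1 S < py < ry2 S ->
  ry1 S <= ry1 Q /\ ry2 Q <= ry2 S.
Proof.
  destruct strip_between_corridor as (H1 & H2 & H3 & H4 & H5 & H6 & H7 & H8 & H9).
  rewrite <- Htop, <- Hbot.
  exact (square_in_corridor_bounded V _ _ _ _ _ _ k1 k2 Hpol Hk1 Hk2 Hh1 Hh2 eq_refl eq_refl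
           H1 H2 H3 H4 H5 H6 H7 H8 H9 Q px py).
Qed.

Lemma reflect_right_valid : valid_square V (reflect_right S).
Proof.
  destruct HS as [[[HSx HSy] _] HSsq]. unfold is_square, width, height in *.
  split; [split|].
  - unfold nondeg, reflect_right, width. simpl. lra.
  - intros [x y] [Hx Hy]. unfold reflect_right, width in Hx, Hy. simpl in Hx, Hy.
    apply reflection_corridor_in_P; lra.
  - unfold is_square, reflect_right, width, height. simpl. lra.
Qed.

(* The square covering a point just to the right of [rx2 S], closer to it than any
   left side of a square of [L], starts left of [rx2 S]; being squeezed between
   [e1] and [e2] its side is at most that of [S]. *)
Lemma cover_square_enters_reflection (L : list rect) : square_cover V L ->
  exists Q, In Q L /\ overlap Q (reflect_right S) /\
    forall p, in_rect Q p -> in_rect S p \/ in_rect (reflect_right S) p.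
Proof.
  intros (_ & HLv & HLc).
  pose proof HS as [[[HSx HSy] _] HSsq]. unfold is_square, width, height in HSsq.
  destruct (exists_left_side_margin (rx2 S) (width S) L) as [eps [Heps Hmargin]].
  { unfold width. lra. }
  unfold width in *.
  set (px := rx2 S + eps / 2). set (py := (ry1 S + ry2 S) / 2).
  destruct (HLc (px, py)) as (Q & HQ & [HQx HQy]).
  { apply reflection_corridor_in_P; unfold px, py; lra. }
  simpl in HQx, HQy.
  destruct (HLv Q HQ) as [HQin HQsq]. pose proof HQin as [[HQx' HQy'] _].
  unfold is_square, width, height in HQsq.
  assert (HQleft : rx1 Q <= rx2 S).
  { apply Rnot_lt_le. intro Hlt. specialize (Hmargin Q HQ Hlt). unfold px in HQx. lra. }
  destruct (square_in_reflection_corridor_bounded Q px py HQin) as [HQbot HQtop];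
    [split; simpl; lra|unfold px; lra|unfold py; lra|].
  unfold px, py in *. exists Q. split; [exact HQ|]. unfold reflect_right, width. split.
  - apply overlap_iff. simpl. lra.
  - intros [x y] [Hx Hy]. simpl in Hx, Hy. destruct (Rle_lt_dec x (rx2 S)).
    + left. split; simpl; lra.
    + right. split; simpl; lra.
Qed.

End Reflection.

Theorem lemma4p12 (V : list (Z * Z)) (S : rect) (d : R) (k1 k2 : nat) (Y : rect) :
  ortho_polygon V ->
  maximal_square V S -> width S = d ->
  (k1 < length V)%nat -> (k2 < length V)%nat ->
  edge_horizontal V k1 -> edge_horizontal V k2 ->
  (* top side of S overlaps e1 (positive-length overlap), bottom side overlaps e2 *)
  IZR (snd (vtx V k1)) = ry2 S ->
  Rmax (rx1 S) (IZR (Z.min (fst (vtx V k1)) (fst (vtx V (nxt V k1))))) <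
    Rmin (rx2 S) (IZR (Z.max (fst (vtx V k1)) (fst (vtx V (nxt V k1))))) ->
  IZR (snd (vtx V k2)) = ry1 S ->
  Rmax (rx1 S) (IZR (Z.min (fst (vtx V k2)) (fst (vtx V (nxt V k2))))) <
    Rmin (rx2 S) (IZR (Z.max (fst (vtx V k2)) (fst (vtx V (nxt V k2))))) ->
  on_edge V k1 (rx2 S, ry2 S) ->
  on_edge V k2 (rx2 S, ry1 S) ->
  strip_between V Y k1 k2 ->
  rx2 Y - rx2 S > d ->
  forall Rs : list rect,
    partial_solution V Rs -> In S Rs ->
    (forall r, In r Rs -> ~ overlap r (reflect_right S)) ->
    partial_solution V (reflect_right S :: Rs).
Proof.
  intros Hpol [HS _] <- Hk1 Hk2 Hh1 Hh2 Htop Htop_ov Hbot Hbot_ov _ _ HY HYfar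
         Rs Hps HSin Hfree.
  apply (partial_solution_cons_square V Rs S); auto.
  - exact (proj2 HS).
  - exact (reflect_right_valid V S Y k1 k2 Hpol HS Hk1 Hk2 Hh1 Hh2 Htop Htop_ov Hbot Hbot_ov
             HY HYfar).
  - intros L HL.
    exact (cover_square_enters_reflection V S Y k1 k2 Hpol HS Hk1 Hk2 Hh1 Hh2 Htop Htop_ov
             Hbot Hbot_ov HY HYfar L HL).
Qed.
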